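(* Let $G$ be a $(k+1)$-critical hypergraph with $k\ge2$, and let $S\subseteq V(G)$ be a separating vertex set of $G$ with $|S|\le2$. Then $S=\{v,w\}$ consists of two distinct vertices, $S$ is independent in $G$ (i.e. $\{v,w\}\notin E(G)$), and $G\div S$ has exactly two components $H_1$ and $H_2$. Moreover, letting $G_i=G[V(H_i)\cup S]$ for $i\in\{1,2\}$, the notation can be chosen so that some $k$-coloring $\varphi_1$ of $G_1$ satisfies $\varphi_1(v)=\varphi_1(w)$, and then: (a) every $k$-coloring $\varphi$ of $G_1$ satisfies $\varphi(v)=\varphi(w)$, and every $k$-coloring $\varphi$ of $G_2$ satisfies $\varphi(v)\ne\varphi(w)$; (b) the hypergraph $G_1+vw$ obtained from $G_1$ by adding the ordinary edge $vw$ is $(k+1)$-critical; (c) the hypergraph obtained from $G_2$ by identifying $v$ and $w$ into a single new vertex is $(k+1)$-critical.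
   Context: A hypergraph is a pair $G=(V,E)$ of finite sets with $E\subseteq 2^V$ and $|e|\ge2$ for all $e\in E$ (no multiple edges). A $k$-coloring is a map $V(G)\to\{1,\dots,k\}$ such that every edge contains two vertices of different colors; $\chi$ is the chromatic number. $G$ is $(k+1)$-critical if $\chi(G)=k+1$ but $\chi(H)\le k$ for every proper subhypergraph $H$. For $X\subseteq V(G)$: $G[X]$ has vertex set $X$ and the edges of $G$ contained in $X$; $G(X)$ has vertex set $X$ and edge set $\{e\cap X: e\in E(G), |e\cap X|\ge2\}$; $G\div S=G(V(G)\setminus S)$. Components are maximal connected subhypergraphs (connected: any two vertices joined by a hyperpath, i.e. a sequence of distinct vertices and distinct edges with consecutive vertices in the intermediate edge). A set $S\subseteq V(G)$ is a separating vertex set if $G$ is the union of two induced subhypergraphs $G_1,G_2$ with $V(G_1)\cap V(G_2)=S$ and $|V(G_i)|>|S|$. Identifying $v$ and $w$ in $G_2$ means replacing them by a new vertex $v^*$ and replacing each edge $e$ meeting $\{v,w\}$ by $(e\setminus\{v,w\})\cup\{v^*\}$. *)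

From HB Require Import structures.
From mathcomp Require Import all_boot.
Set Implicit Arguments. Unset Strict Implicit. Unset Printing Implicit Defensive.

(* A (potential) hypergraph on a finite ambient vertex type T:
   a pair (V, E) with V : {set T} and E : {set {set T}} (no multiple edges). *)
Definition hg (T : finType) := ({set T} * {set {set T}})%type.

Section Hyp.
Variable T : finType.
Implicit Types (G H : hg T) (X S : {set T}).

Definition hypergraph G : Prop :=
  forall e, e \in G.2 -> e \subset G.1 /\ 1 < #|e|.

(* k-coloring: map V(G) -> {1,...,k}, every edge contains two vertices
   of different colours (values outside V(G) are irrelevant). *)
Definition coloring (k : nat) G (f : T -> nat) : Prop :=
  (forall x, x \in G.1 -> 1 <= f x <= k) /\
  (forall e, e \in G.2 -> exists x y, [/\ x \in e, y \in e & f x != f y]).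

Definition colorable (k : nat) G : Prop := exists f, coloring k G f.

Definition chi_eq G (m : nat) : Prop :=
  colorable m G /\ forall j, colorable j G -> m <= j.

Definition subhg H G : Prop :=
  hypergraph H /\ H.1 \subset G.1 /\ H.2 \subset G.2.

Definition proper_subhg H G : Prop := subhg H G /\ H <> G.

Definition critical (k : nat) G : Prop :=
  hypergraph G /\ chi_eq G k.+1 /\
  forall H, proper_subhg H G -> exists m, chi_eq H m /\ m <= k.

Definition induced G X : hg T := (X, [set e in G.2 | e \subset X]).

Definition restrict G X : hg T :=
  (X, [set e :&: X | e in G.2 & 1 < #|e :&: X|]).

Definition delete G S : hg T := restrict G (G.1 :\: S).

Definition separating G S : Prop :=
  exists X1 X2,
    X1 \subset G.1 /\ X2 \subset G.1 /\ X1 :|: X2 = G.1 /\ X1 :&: X2 = S /\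
    G.2 = (induced G X1).2 :|: (induced G X2).2 /\
    #|S| < #|X1| /\ #|S| < #|X2|.

Definition hyperpath H (u v : T) : Prop :=
  exists (vs : seq T) (es : seq {set T}),
    uniq vs /\ uniq es /\ size vs = (size es).+1 /\
    head v vs = u /\ last u vs = v /\
    {subset vs <= H.1} /\ {subset es <= H.2} /\
    (forall i, i < size es ->
       nth u vs i \in nth set0 es i /\ nth u vs i.+1 \in nth set0 es i).

Definition connected H : Prop :=
  forall u v, u \in H.1 -> v \in H.1 -> hyperpath H u v.

Definition component H G : Prop :=
  [/\ subhg H G, connected H &
      forall H', subhg H' G -> connected H' -> subhg H H' -> H' = H].

Definition add_edge G (v w : T) : hg T := (G.1, [set v; w] |: G.2).

End Hyp.

(* identifying v and w into a new vertex v* (= None) ; old vertices x become Some x *)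
Definition identify (T : finType) (G : hg T) (v w : T) : hg (option T) :=
  (None |: (Some @: (G.1 :\: [set v; w])),
   [set (if (v \in e) || (w \in e)
         then None |: (Some @: (e :\: [set v; w]))
         else Some @: e) | e : {set T} in G.2]).

(* Write G = G[X1] u G[X2] with X1 n X2 = S. Both sides are proper, hence
   k-colorable, and k-colorings of the two sides inducing the same equality
   pattern on S glue, after permuting colors, into a k-coloring of G. As G is
   not k-colorable, this excludes |S| <= 1 and the edge vw, and forces one side
   to admit only colorings with v, w equal and the other only colorings with
   v, w distinct. Splitting G between C u S, for a component C of G - S, and
   the rest shows that no two components have the same behaviour, so there are
   exactly two. Finally, a proper subhypergraph of G1 + vw, or of G2 with v and
   w identified, is colored by combining a k-coloring of a proper
   subhypergraph of G built from it with the behaviour of the other side. *)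

From HB Require Import structures.
From mathcomp Require Import all_boot zify.
From Stdlib Require Import Classical.
Set Implicit Arguments. Unset Strict Implicit. Unset Printing Implicit Defensive.

Section Colorings.
Variable T : finType.
Implicit Types (G H : hg T) (X Y : {set T}).

Lemma coloring_sub k G H f :
  coloring k G f -> H.1 \subset G.1 -> H.2 \subset G.2 -> coloring k H f.
Proof.
move=> [colf edgef] sV sE; split=> [x /(subsetP sV)|e /(subsetP sE)]; first exact: colf.
exact: edgef.
Qed.

Lemma colorable_leq j k H : colorable j H -> j <= k -> colorable k H.
Proof.
move=> [f [colf edgef]] jk; exists f; split=> // x /colf /andP [-> fj].
exact: leq_trans fj jk.
Qed.

Lemma chi_leq_of_colorable k H : colorable k H -> exists m, chi_eq H m /\ m <= k.
Proof.
elim: k => [|k IH] colH; first by exists 0.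
have [colk|ncolk] := classic (colorable k H).
  by have [m [chim mk]] := IH colk; exists m; split=> //; exact: leqW.
exists k.+1; split=> //; split=> // j colj; rewrite ltnNge; apply/negP=> jk.
exact/ncolk/(colorable_leq colj jk).
Qed.

Lemma critical_not_colorable k G : critical k G -> ~ colorable k G.
Proof. by move=> [_ [[_ chi_min] _]] /chi_min; rewrite ltnn. Qed.

Lemma critical_proper_colorable k G H :
  critical k G -> proper_subhg H G -> colorable k H.
Proof. by move=> [_ [_ critG]] /critG [m [[colm _] mk]]; exact: colorable_leq colm mk. Qed.

Lemma critical_intro k G :
  hypergraph G -> colorable k.+1 G -> ~ colorable k G ->
  (forall H, proper_subhg H G -> colorable k H) -> critical k G.
Proof.
move=> hG colG ncolG properG; split=> //; split; last by move=> H /properG/chi_leq_of_colorable.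
split=> // j colj; rewrite ltnNge; apply/negP=> jk.
exact/ncolG/(colorable_leq colj jk).
Qed.

Lemma subhg_eq H G : subhg H G -> G.1 \subset H.1 -> G.2 \subset H.2 -> H = G.
Proof.
case: H => V E [_ [/= sV sE]] /= sV' sE'.
by case: G sV sE sV' sE' => V' E' /= *; congr pair; apply/eqP; rewrite eqEsubset; apply/andP.
Qed.

Lemma induced_hypergraph G X : hypergraph G -> hypergraph (induced G X).
Proof. by move=> hG e; rewrite /= inE => /andP [/hG [_ ->] ->]. Qed.

Lemma induced_proper G X :
  hypergraph G -> X \subset G.1 -> X != G.1 -> proper_subhg (induced G X) G.
Proof.
move=> hG XV XnV; split; last by move=> GX; rewrite -GX eqxx in XnV.
split; first exact: induced_hypergraph.
by split=> //=; apply/subsetP=> e; rewrite inE => /andP [].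
Qed.

Lemma coloring_induced_sub k G X Y f :
  X \subset Y -> coloring k (induced G Y) f -> coloring k (induced G X) f.
Proof.
move=> XY colf; apply: (coloring_sub colf) => //=.
by apply/subsetP=> e; rewrite !inE => /andP [-> eX]; exact: subset_trans eX XY.
Qed.

Lemma coloring_new_color k H f u : hypergraph H -> coloring k H f ->
  coloring k.+1 H (fun x => if x == u then k.+1 else f x).
Proof.
move=> hH [colf edgef]; split=> [x xH|e eH].
  by case: ifP => _ //; have := colf x xH; lia.
have [x [y [xe ye fxy]]] := edgef e eH; exists x, y; split=> //.
have [se _] := hH e eH.
have := colf x (subsetP se x xe); have := colf y (subsetP se y ye).
case: (eqVneq x u) => [xu|_]; case: (eqVneq y u) => [yu|_] //.
- by rewrite xu yu eqxx in fxy.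
all: move=> *; apply/eqP; lia.
Qed.

Lemma coloring_edge2 k H f v w : coloring k H f -> [set v; w] \in H.2 -> f v != f w.
Proof.
move=> [_ edgef] /edgef [x [y [xe ye fxy]]]; move: xe ye fxy; rewrite !inE.
by case/orP=> /eqP -> /orP [] /eqP ->; rewrite ?eqxx // eq_sym.
Qed.

End Colorings.

Definition nswap (p q x : nat) := if x == p then q else if x == q then p else x.

Lemma nswapK p q : involutive (nswap p q).
Proof.
move=> x; rewrite /nswap; case: (eqVneq x p) => [->|xp].
  by rewrite eqxx; case: eqVneq.
case: (eqVneq x q) => [->|xq]; first by rewrite eqxx.
by rewrite (negPf xp) (negPf xq).
Qed.

Lemma nswap_inj p q : injective (nswap p q).
Proof. exact: inv_inj (nswapK p q). Qed.

Lemma nswap_range k p q c :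
  0 < p <= k -> 0 < q <= k -> 0 < c <= k -> 0 < nswap p q c <= k.
Proof. by rewrite /nswap; case: ifP => _ //; case: ifP. Qed.

(* Swap [a] with [a'], then the image of [b] with [b']. *)
Lemma color_perm_exists k a b a' b' :
  0 < a <= k -> 0 < b <= k -> 0 < a' <= k -> 0 < b' <= k -> (a == b) = (a' == b') ->
  exists s : nat -> nat,
    [/\ injective s, forall c, 0 < c <= k -> 0 < s c <= k, s a = a' & s b = b'].
Proof.
move=> ha hb ha' hb' ab_ab'.
set b1 := nswap a a' b.
have hb1 : 0 < b1 <= k by exact: nswap_range.
have sa : nswap a a' a = a' by rewrite /nswap eqxx.
exists (nswap b1 b' \o nswap a a'); split=> [x y /= /nswap_inj /nswap_inj //|c hc /=||].
- by apply: nswap_range => //; apply: nswap_range.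
- rewrite /= sa /nswap; have [eq_ab|neq_ab] := eqVneq a b.
    by rewrite /b1 -eq_ab sa; move: ab_ab'; rewrite eq_ab eqxx => /esym/eqP <-; rewrite !eqxx.
  have a'b1 : (a' == b1) = false by rewrite /b1 -{1}sa (inj_eq (@nswap_inj _ _)) (negPf neq_ab).
  by rewrite a'b1 -ab_ab' (negPf neq_ab).
- by rewrite /= -/b1 /nswap eqxx.
Qed.

Section Glue.
Variable T : finType.
Implicit Types (G : hg T) (X : {set T}).

Definition hg_split G X1 X2 : Prop :=
  X1 :|: X2 = G.1 /\ forall e, e \in G.2 -> e \subset X1 \/ e \subset X2.

Lemma hg_splitC G X1 X2 : hg_split G X1 X2 -> hg_split G X2 X1.
Proof. by case=> X12 splitE; split=> [|e /splitE []]; [rewrite setUC | right | left]. Qed.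

Lemma split_private_vertex G X1 X2 a :
  hg_split G X1 X2 -> a \in X1 -> a \notin X2 -> a \in G.1 :\: (X1 :&: X2).
Proof. by case=> <- _ a1 a2; rewrite !inE a1 (negPf a2). Qed.

Lemma colorable_glue k G X1 X2 f1 f2 (s : nat -> nat) :
  hg_split G X1 X2 ->
  coloring k (induced G X1) f1 -> coloring k (induced G X2) f2 ->
  injective s -> (forall c, 0 < c <= k -> 0 < s c <= k) ->
  (forall x, x \in X1 -> x \in X2 -> s (f2 x) = f1 x) -> colorable k G.
Proof.
move=> [X12 splitE] [col1 edge1] [col2 edge2] s_inj s_range s_agree.
pose f x := if x \in X1 then f1 x else s (f2 x).
exists f; split=> [x|e eE].
  by rewrite -X12 inE /f; case: ifP => [x1 _|_ /= x2]; [apply: col1 | apply/s_range/col2].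
have [eX1|eX2] := splitE e eE.
  have [x [y [xe ye fxy]]] : exists x y, [/\ x \in e, y \in e & f1 x != f1 y].
    by apply: edge1; rewrite inE eE eX1.
  by exists x, y; rewrite /f (subsetP eX1 x xe) (subsetP eX1 y ye).
have [x [y [xe ye fxy]]] : exists x y, [/\ x \in e, y \in e & f2 x != f2 y].
  by apply: edge2; rewrite inE eE eX2.
have fe z : z \in e -> f z = s (f2 z).
  by move=> ze; rewrite /f; case: ifP => // z1; rewrite s_agree // (subsetP eX2).
by exists x, y; rewrite !fe // (inj_eq s_inj).
Qed.

End Glue.

Lemma last_take_nth (A : Type) (u : A) p i :
  i <= size p -> last u (take i p) = nth u (u :: p) i.
Proof. by case: i => [|i] ip /=; rewrite ?take0 // (take_nth u ip) last_rcons. Qed.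

Section Connectivity.
Variable T : finType.
Variable H : hg T.
Hypothesis hH : hypergraph H.

Definition hadj : rel T := fun x y => [exists e in H.2, (x \in e) && (y \in e)].

Lemma hadj_sym : symmetric hadj.
Proof.
by move=> x y; apply/existsP/existsP=> [] [e /and3P [eH xe ye]]; exists e; rewrite eH xe ye.
Qed.

Lemma hadj_mem x y : hadj x y -> y \in H.1.
Proof. by case/existsP=> e /and3P [/hH [eV _] _ ye]; exact: (subsetP eV). Qed.

Lemma connect_mem x y : connect hadj x y -> x \in H.1 -> y \in H.1.
Proof.
have closedV : closed hadj H.1.
  by move=> a b ab; rewrite (hadj_mem ab); rewrite hadj_sym in ab; rewrite (hadj_mem ab).
by move/(closed_connect closedV) ->.
Qed.

Definition hedge (x y : T) := odflt set0 [pick e in H.2 | (x \in e) && (y \in e)].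

Lemma hedgeP x y : hadj x y -> [/\ hedge x y \in H.2, x \in hedge x y & y \in hedge x y].
Proof.
rewrite /hedge; case: pickP => [e /and3P [] //|none /existsP [e /and3P [eH xe ye]]].
by move: (none e); rewrite eH xe ye.
Qed.

Definition reach x := [set y in H.1 | connect hadj x y].

Definition comp_at x := induced H (reach x).

Lemma reach_sub x : reach x \subset H.1.
Proof. by apply/subsetP=> y; rewrite inE => /andP []. Qed.

Lemma reach_self x : x \in H.1 -> x \in reach x.
Proof. by move=> xH; rewrite inE xH connect0. Qed.

Lemma reach_eq x y : y \in reach x -> reach y = reach x.
Proof.
rewrite inE => /andP [_ xy]; apply/setP=> z; rewrite !inE; case: (z \in H.1) => //=.
by rewrite (same_connect (sym_connect_sym hadj_sym) xy).
Qed.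

Lemma reach_edge_sub x e z : e \in H.2 -> z \in e -> z \in reach x -> e \subset reach x.
Proof.
move=> eH ze; rewrite inE => /andP [_ xz]; apply/subsetP=> y ye.
have zy : hadj z y by apply/existsP; exists e; rewrite eH ze ye.
by rewrite inE (hadj_mem zy) (connect_trans xz (connect1 zy)).
Qed.

Lemma reach_hadj x y z : y \in reach x -> hadj y z -> z \in reach x.
Proof.
by rewrite !inE => /andP [_ xy] yz; rewrite (hadj_mem yz) (connect_trans xy (connect1 yz)).
Qed.

Definition min_path u p :=
  forall q, path hadj u q -> last u q = last u p -> size p <= size q.

Lemma connect_min_path u y :
  connect hadj u y -> exists p, [/\ path hadj u p, last u p = y & min_path u p].
Proof.
move=> uy; have ex : exists n, [exists p : n.-tuple T, path hadj u p && (last u p == y)].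
  case/connectP: uy => p up ->; exists (size p).
  by apply/existsP; exists (in_tuple p); rewrite up /=.
case: (ex_minnP ex) => n /existsP [p /andP [up /eqP py]] pmin.
exists p; split=> // q uq; rewrite py size_tuple => qy; apply: pmin; apply/existsP.
by exists (in_tuple q); rewrite uq qy /=.
Qed.

Lemma min_path_no_chord u p i j : path hadj u p -> min_path u p ->
  i.+1 < j -> j <= size p -> ~~ hadj (nth u (u :: p) i) (nth u (u :: p) j).
Proof.
move=> up pmin ij jp; apply/negP=> chord.
have dj : drop j.-1 p = nth u (u :: p) j :: drop j p.
  by case: j ij jp chord => // j _ jp _; rewrite (drop_nth u jp).
pose q := take i p ++ drop j.-1 p.
suff: size p <= size q by rewrite size_cat size_take size_drop; case: ifP; lia.
apply: pmin.
  rewrite cat_path take_path //= last_take_nth ?dj /=; last lia.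
  by rewrite chord; move: up; rewrite -{1}(cat_take_drop j p) cat_path last_take_nth // => /andP [].
by rewrite last_cat dj /= -[in RHS](cat_take_drop j.-1 p) last_cat dj.
Qed.

Lemma min_path_uniq u p : path hadj u p -> min_path u p -> uniq (u :: p).
Proof.
move=> up pmin; apply/(uniqPn u) => -[i [j [ij js nth_ij]]].
have [jp|] := ltnP j (size p).
  have := min_path_no_chord up pmin (_ : i.+1 < j.+1) jp; rewrite ltnS nth_ij => /(_ ij).
  by rewrite (pathP u up j jp).
rewrite /= ltnS in js => pj; have /eqP jE : j == size p by rewrite eqn_leq js pj.
have := pmin (take i p) (take_path _ up).
rewrite last_take_nth ?nth_ij ?jE -?last_nth ?size_take; last lia.
by move=> /(_ erefl); case: ifP; lia.
Qed.

Lemma hyperpath_of_connect x u y :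
  u \in reach x -> connect hadj u y -> hyperpath (comp_at x) u y.
Proof.
move=> ux /connect_min_path [p [up py pmin]].
pose nthv i := nth u (u :: p) i.
have adjp i : i < size p -> hadj (nthv i) (nthv i.+1) by exact: (pathP u up).
pose es := mkseq (fun i => hedge (nthv i) (nthv i.+1)) (size p).
have reach_p : {subset u :: p <= reach x}.
  move=> z zp; move: ux; rewrite !inE => /andP [uH xu].
  have uz := path_connect up zp.
  by rewrite (connect_mem uz uH) (connect_trans xu uz).
exists (u :: p), es; split; first exact: min_path_uniq.
split.
  rewrite map_inj_in_uniq ?iota_uniq // => i j; rewrite !mem_iota /= !add0n => ip jp eij.
  wlog ij : i j ip jp eij / i < j.
    move=> wl; case: (ltngtP i j) => [|ji|] //; [exact: wl | exact/esym/wl].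
  have [eH ei _] := hedgeP (adjp i ip); have [_ _ ej] := hedgeP (adjp j jp).
  have := min_path_no_chord up pmin (_ : i.+1 < j.+1) jp; rewrite ltnS => /(_ ij).
  by case/negP; apply/existsP; exists (hedge (nthv i) (nthv i.+1)); rewrite eH ei eij ej.
do 5?split; rewrite ?size_mkseq //; last first.
  by move=> i ip; rewrite nth_mkseq //; case: (hedgeP (adjp i ip)).
move=> e /mapP [i]; rewrite mem_iota add0n => /andP [_ ip] ->; have [eH ei _] := hedgeP (adjp i ip).
rewrite inE eH (reach_edge_sub eH ei) // reach_p // mem_nth //= ltnS ltnW //.
Qed.

Lemma connect_of_hyperpath H' u v : hyperpath H' u v -> H'.2 \subset H.2 -> connect hadj u v.
Proof.
move=> [[|a vs] [es [_ [_ [//= [sz] [/= <- [la [_ [ses nth_es]]]]]]]]] sE.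
suff: forall i, i <= size es -> connect hadj a (nth a (a :: vs) i).
  by move/(_ (size es) (leqnn _)); rewrite -sz -last_nth la.
elim=> [|i IH] ilt; first exact: connect0.
apply: connect_trans (IH (ltnW ilt)) (connect1 _); apply/existsP.
have [h1 h2] := nth_es i ilt; exists (nth set0 es i); rewrite h1 h2 !andbT.
by apply: (subsetP sE); apply: ses; rewrite mem_nth.
Qed.

Lemma comp_at_component x : x \in H.1 -> component (comp_at x) H.
Proof.
move=> xH.
have sub : subhg (comp_at x) H.
  split; first exact: induced_hypergraph.
  by split; [exact: reach_sub | apply/subsetP=> e; rewrite inE => /andP []].
split=> // [u v /= ux vx|[V' E'] [hH' [/= V'H E'H]] connH' [_ [/= sV' sE']]].
  apply: hyperpath_of_connect => //; move: ux vx; rewrite !inE => /andP [_ xu] /andP [_ xv].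
  by rewrite (same_connect (sym_connect_sym hadj_sym) xu) in xv.
have V'E : V' = reach x.
  apply/eqP; rewrite eqEsubset sV' andbT; apply/subsetP=> y yV'.
  have xV' : x \in V' by apply: (subsetP sV'); exact: reach_self.
  by rewrite inE (subsetP V'H y yV') (connect_of_hyperpath (connH' x y xV' yV') E'H).
subst V'; congr pair; apply/eqP; rewrite eqEsubset sE' andbT.
by apply/subsetP=> e eE'; rewrite inE (subsetP E'H e eE'); have [] := hH' e eE'.
Qed.

Lemma component_comp_at H' : component H' H -> H.1 != set0 ->
  exists2 x, x \in H.1 & H' = comp_at x.
Proof.
case=> [[hH' [V'H E'H]] connH' maxH'] /set0Pn [z zH].
have [x xH V'x] : exists2 x, x \in H.1 & H'.1 \subset reach x.
  have [->|[x xV']] := set_0Vmem H'.1; first by exists z; rewrite ?sub0set.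
  exists x; first exact: (subsetP V'H).
  apply/subsetP=> y yV'; rewrite inE (subsetP V'H y yV').
  exact: connect_of_hyperpath (connH' x y xV' yV') E'H.
exists x => //; apply: esym; have [subx connx _] := comp_at_component xH.
apply: maxH' => //; split=> //; split=> //=.
apply/subsetP=> e eE'; rewrite inE (subsetP E'H e eE').
by have [eV' _] := hH' e eE'; exact: subset_trans eV' V'x.
Qed.

End Connectivity.

Lemma separating_split (T : finType) (G : hg T) S : separating G S ->
  exists X1 X2, [/\ hg_split G X1 X2, X1 :&: X2 = S,
    exists2 a, a \in X1 & a \notin X2 & exists2 b, b \in X2 & b \notin X1].
Proof.
move=> [X1 [X2 [_ [_ [X12 [IX [EG [lt1 lt2]]]]]]]].
have outside X Y : X :&: Y = S -> #|S| < #|X| -> exists2 a, a \in X & a \notin Y.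
  move=> XY ltX; have /subsetPn [a aX aS] : ~~ (X \subset S).
    by apply: contraTN ltX => /subset_leq_card; rewrite -leqNgt.
  by exists a => //; apply: contra aS => aY; rewrite -XY inE aX aY.
exists X1, X2; split=> //; [|exact: outside|by apply: outside; rewrite // setIC].
by split=> // e; rewrite EG !inE => /orP [] /andP [_ eX]; [left|right].
Qed.

Section Critical.
Variables (T : finType) (k : nat) (G : hg T).
Hypothesis crit : critical k G.
Implicit Types (X Y : {set T}).

Let hG : hypergraph G. Proof. by case: crit. Qed.

Lemma split_colorable X1 X2 b :
  hg_split G X1 X2 -> b \in X2 -> b \notin X1 -> colorable k (induced G X1).
Proof.
move=> [X12 _] b2 b1; apply: (critical_proper_colorable crit); apply: induced_proper => //.
  by rewrite -X12 subsetUl.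
by apply: contraNneq b1 => ->; rewrite -X12 inE b2 orbT.
Qed.

(* Otherwise the two colorings glue, after permuting colors, into a k-coloring
   of [G]. *)
Lemma split_colorings_pattern Y1 Y2 v w g1 g2 :
  hg_split G Y1 Y2 -> Y1 :&: Y2 = [set v; w] ->
  coloring k (induced G Y1) g1 -> coloring k (induced G Y2) g2 ->
  (g1 v == g1 w) != (g2 v == g2 w).
Proof.
move=> splitY IY col1 col2; apply/negP=> /eqP pattern.
have : v \in Y1 :&: Y2 /\ w \in Y1 :&: Y2 by rewrite IY !inE !eqxx orbT.
rewrite !inE => -[/andP [v1 v2] /andP [w1 w2]].
have [range1 _] := col1; have [range2 _] := col2.
have [s [s_inj s_range sv sw]] := color_perm_exists
  (range2 v v2) (range2 w w2) (range1 v v1) (range1 w w1) (esym pattern).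
apply: (critical_not_colorable crit) (colorable_glue splitY col1 col2 s_inj s_range _).
move=> x x1 x2; have : x \in Y1 :&: Y2 by rewrite inE x1 x2.
by rewrite IY !inE => /orP [] /eqP ->.
Qed.

Lemma critical_separating_pair S : separating G S -> #|S| <= 2 ->
  exists v w, v != w /\ S = [set v; w].
Proof.
move=> /separating_split [X1 [X2 [splitX IX [a a1 a2] [b b2 b1]]]] cardS.
have [f1 col1] := split_colorable splitX b2 b1.
have [f2 col2] := split_colorable (hg_splitC splitX) a1 a2.
have [S0|[/eqP/cards1P [s S1E]|/eqP/cards2P //]] : #|S| = 0 \/ #|S| = 1 \/ #|S| = 2 by lia.
- case: (critical_not_colorable crit); apply: (colorable_glue (s := id) splitX col1 col2) => //.
  by move=> x x1 x2; move/eqP: S0; rewrite cards_eq0 -IX => /eqP/setP/(_ x); rewrite !inE x1 x2.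
have := split_colorings_pattern splitX (_ : _ = [set s; s]) col1 col2.
by rewrite !eqxx setUid IX => /(_ S1E).
Qed.

Lemma split_pair_not_edge X1 X2 v w :
  hg_split G X1 X2 -> X1 :&: X2 = [set v; w] ->
  colorable k (induced G X1) -> colorable k (induced G X2) -> [set v; w] \notin G.2.
Proof.
move=> splitX IX [f1 col1] [f2 col2]; apply/negP=> vwE.
have [vw1 vw2] : [set v; w] \subset X1 /\ [set v; w] \subset X2.
  by rewrite -IX subsetIl subsetIr.
have := split_colorings_pattern splitX IX col1 col2.
by rewrite (negPf (coloring_edge2 col1 _)) ?(negPf (coloring_edge2 col2 _)) // inE vwE.
Qed.

Definition colorable_same Y v w := exists2 f, coloring k (induced G Y) f & f v = f w.
Definition colorable_diff Y v w := exists2 f, coloring k (induced G Y) f & f v <> f w.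

Lemma colorable_same_sub X Y v w : X \subset Y -> colorable_same Y v w -> colorable_same X v w.
Proof. by move=> XY [f colf fvw]; exists f => //; exact: coloring_induced_sub colf. Qed.

Lemma colorable_diff_sub X Y v w : X \subset Y -> colorable_diff Y v w -> colorable_diff X v w.
Proof. by move=> XY [f colf fvw]; exists f => //; exact: coloring_induced_sub colf. Qed.

Lemma colorable_same_or_diff Y v w :
  colorable k (induced G Y) -> colorable_same Y v w \/ colorable_diff Y v w.
Proof.
by case=> f colf; case: (eqVneq (f v) (f w)) => fvw; [left|right]; exists f => //; apply/eqP.
Qed.

Lemma split_not_same2 Y1 Y2 v w : hg_split G Y1 Y2 -> Y1 :&: Y2 = [set v; w] ->
  ~ (colorable_same Y1 v w /\ colorable_same Y2 v w).
Proof.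
move=> splitY IY [[f1 col1 f1vw] [f2 col2 f2vw]].
by have := split_colorings_pattern splitY IY col1 col2; rewrite f1vw f2vw !eqxx.
Qed.

Lemma split_not_diff2 Y1 Y2 v w : hg_split G Y1 Y2 -> Y1 :&: Y2 = [set v; w] ->
  ~ (colorable_diff Y1 v w /\ colorable_diff Y2 v w).
Proof.
move=> splitY IY [[f1 col1 /eqP/negPf f1vw] [f2 col2 /eqP/negPf f2vw]].
by have := split_colorings_pattern splitY IY col1 col2; rewrite f1vw f2vw.
Qed.

End Critical.

Section SplitAtPair.
Variables (T : finType) (k : nat) (G : hg T) (X1 X2 : {set T}) (v w : T).
Hypothesis crit : critical k G.
Hypothesis vw : v != w.
Hypothesis splitX : hg_split G X1 X2.
Hypothesis IX : X1 :&: X2 = [set v; w].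
Hypothesis col1 : colorable k (induced G X1).
Hypothesis same1 : forall f, coloring k (induced G X1) f -> f v = f w.
Hypothesis col2 : colorable k (induced G X2).
Hypothesis diff2 : forall f, coloring k (induced G X2) f -> f v <> f w.

Let hG : hypergraph G. Proof. by case: crit. Qed.
Let X1V : X1 \subset G.1. Proof. by case: splitX => <- _; exact: subsetUl. Qed.
Let X2V : X2 \subset G.1. Proof. by case: splitX => <- _; exact: subsetUr. Qed.
Let vw_sub1 : [set v; w] \subset X1. Proof. by rewrite -IX subsetIl. Qed.
Let vw_sub2 : [set v; w] \subset X2. Proof. by rewrite -IX subsetIr. Qed.
Let v1 : v \in X1. Proof. by rewrite (subsetP vw_sub1) // !inE eqxx. Qed.
Let w1 : w \in X1. Proof. by rewrite (subsetP vw_sub1) // !inE eqxx orbT. Qed.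
Let w2 : w \in X2. Proof. by rewrite (subsetP vw_sub2) // !inE eqxx orbT. Qed.

Lemma edge_not_both e : e \in G.2 -> e \subset X1 -> e \subset X2 -> False.
Proof.
move=> eE e1 e2; have [_ card_e] := hG eE.
have evw : e \subset [set v; w] by rewrite -IX subsetI e1 e2.
have /eqP eq_e : e == [set v; w] by rewrite eqEcard evw cards2 vw.
by have := split_pair_not_edge crit splitX IX col1 col2; rewrite -eq_e eE.
Qed.

Lemma add_edge_proper_colorable H :
  proper_subhg H (add_edge (induced G X1) v w) -> colorable k H.
Proof.
move=> [[hH [/= HV HE]] HneG]; have [vwH|vwH] := boolP ([set v; w] \in H.2); last first.
  have [f colf] := col1; exists f; apply: (coloring_sub colf) => //.
  apply/subsetP=> e eH; move: (subsetP HE e eH); rewrite !inE.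
  by case: eqP => [eq_e|//]; rewrite -eq_e eH in vwH.
pose K : hg T := (H.1 :|: X2, (H.2 :\ [set v; w]) :|: (induced G X2).2).
have subK : subhg K G.
  split; last split=> /=.
  - move=> e; rewrite !inE => /orP [/andP [_ eH]|/andP [eE eX2]].
      by have [eH1 ?] := hH e eH; rewrite (subset_trans eH1) ?subsetUl.
    by have [_ ?] := hG eE; rewrite (subset_trans eX2) ?subsetUr.
  - by rewrite subUset X2V (subset_trans HV).
  - rewrite subUset; apply/andP; split; apply/subsetP=> e; rewrite !inE; last by case/andP.
    by case/andP=> /negPf ne /(subsetP HE); rewrite !inE ne => /andP [].
have KneG : K <> G.
  move=> KG; apply: HneG; apply: subhg_eq => //=; last first.
    apply/subsetP=> e; rewrite !inE; case: eqP => [->|_ /andP [eE eX1]] //.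
    have : e \in K.2 by rewrite KG.
    by rewrite !inE eE => /orP [/andP [] //|/(edge_not_both eE eX1)].
  apply/subsetP=> z zX1; have : z \in K.1 by rewrite KG (subsetP X1V).
  rewrite inE => /orP [//|zX2]; have [vwV _] := hH _ vwH.
  by apply: (subsetP vwV); rewrite -IX inE zX1 zX2.
have [f colf] := critical_proper_colorable crit (conj subK KneG).
have fvw : f v != f w.
  by apply/eqP; apply: diff2; apply: (coloring_sub colf); rewrite subsetUr.
case: colf => rangef edgef; exists f; split=> [x xH|e eH]; first by apply: rangef; rewrite inE xH.
have [->|ne] := eqVneq e [set v; w]; last by apply: edgef; rewrite !inE ne eH.
by exists v, w; rewrite !inE !eqxx orbT.
Qed.

Lemma add_edge_critical : critical k (add_edge (induced G X1) v w).
Proof.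
have hG1 := induced_hypergraph (X := X1) hG.
apply: critical_intro.
- move=> e; rewrite in_setU1 => /orP [/eqP ->|eG1]; last exact: hG1.
  by split; [rewrite subUset !sub1set v1 w1 | rewrite cards2 vw].
- have [f colf] := col1; have [rangef' edgef'] := coloring_new_color w hG1 colf.
  exists (fun x => if x == w then k.+1 else f x); split=> // e.
  rewrite in_setU1 => /orP [/eqP ->|]; last exact: edgef'.
  have [rangef _] := colf; have := rangef v v1.
  by exists v, w; rewrite !inE !eqxx orbT (negPf vw); split=> //; apply/eqP; lia.
- move=> [f colf]; have := coloring_edge2 (v := v) (w := w) colf.
  rewrite /= in_setU1 eqxx => /(_ isT).
  by rewrite same1 ?eqxx //; apply: (coloring_sub colf) => //; exact: subsetUr.
- exact: add_edge_proper_colorable.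
Qed.

Definition merge (x : T) : option T := if x \in [set v; w] then None else Some x.

Definition merge_edge (e : {set T}) : {set option T} :=
  if (v \in e) || (w \in e) then None |: (Some @: (e :\: [set v; w])) else Some @: e.

Lemma identifyE K :
  identify K v w = (None |: (Some @: (K.1 :\: [set v; w])), merge_edge @: K.2).
Proof. by []. Qed.

Lemma mem_merge_edge (e : {set T}) x : x \in e -> merge x \in merge_edge e.
Proof.
move=> xe; rewrite /merge /merge_edge; case: ifP => xvw.
  by move: xvw; rewrite !inE => /orP [] /eqP <-; rewrite xe ?orbT setU11.
by case: ifP => _; rewrite ?in_setU1 imset_f ?orbT // inE xvw.
Qed.

Lemma merge_edgeP (e : {set T}) o : o \in merge_edge e -> exists2 x, x \in e & merge x = o.
Proof.
rewrite /merge_edge /merge; case: ifP => vwe.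
  rewrite in_setU1 => /orP [/eqP ->|/imsetP [y]]; last first.
    by rewrite inE => /andP [/negPf yvw ye] ->; exists y; rewrite ?yvw.
  by case/orP: vwe => ?; [exists v | exists w]; rewrite // !inE eqxx ?orbT.
case/imsetP=> y ye ->; exists y; rewrite // !inE.
by case: eqP => [yv|]; case: eqP => [yw|] //; rewrite -?yv -?yw ye ?orbT in vwe.
Qed.

Lemma side2_edge_leaves_pair e :
  e \in (induced G X2).2 -> exists2 y, y \in e & y \notin [set v; w].
Proof.
rewrite inE => /andP [eE eX2]; apply/subsetPn; apply/negP=> evw.
by apply: (edge_not_both eE); apply: subset_trans evw _.
Qed.

Lemma identify_hypergraph : hypergraph (identify (induced G X2) v w).
Proof.
have hG2 := induced_hypergraph (X := X2) hG.
move=> o; rewrite identifyE => /imsetP [e eE ->]; have [eX2 _] := hG2 e eE.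
split.
  apply/subsetP=> _ /merge_edgeP [x xe <-]; rewrite /merge; case: ifP => xvw.
    exact: setU11.
  by rewrite in_setU1 imset_f ?orbT // inE xvw (subsetP eX2).
have [y ye yvw] := side2_edge_leaves_pair eE.
have [z ze zy] : exists2 z, z \in e & z != y.
  have [_ /card_gt1P [a [b [ae be ab]]]] := hG2 e eE.
  by case: (eqVneq a y) => [ay|]; [exists b; rewrite // -ay eq_sym | exists a].
apply/card_gt1P; exists (merge z), (merge y); rewrite !mem_merge_edge //.
by rewrite /merge (negPf yvw); case: ifP => //= _; rewrite (inj_eq (@Some_inj _)).
Qed.

Lemma coloring_unmerge psi : coloring k (identify (induced G X2) v w) psi ->
  coloring k (induced G X2) (psi \o merge).
Proof.
move=> [rangepsi edgepsi]; split=> [x xX2|e eE].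
  apply: rangepsi; rewrite /= /merge; case: ifP => xvw; first exact: setU11.
  by rewrite in_setU1 imset_f ?orbT // inE xvw.
have [o1 [o2 [o1e o2e psio]]] := edgepsi (merge_edge e) (imset_f _ eE).
have [x1 x1e eq1] := merge_edgeP o1e; have [x2 x2e eq2] := merge_edgeP o2e.
by exists x1, x2; rewrite /= eq1 eq2.
Qed.

Lemma coloring_merged (Hs : hg (option T)) (K : hg T) f :
  coloring k K f -> f v = f w -> v \in K.1 ->
  Hs.2 \subset (identify (induced G X2) v w).2 ->
  (forall x, Some x \in Hs.1 -> x \in K.1) ->
  (forall e, e \in (induced G X2).2 -> merge_edge e \in Hs.2 -> e \in K.2) ->
  coloring k Hs (fun o => f (odflt v o)).
Proof.
move=> [rangef edgef] fvw vK HsE HsV HsK; split=> [[x /HsV|_]|o oHs]; try exact: rangef.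
have /imsetP [e eE oe] := subsetP HsE o oHs; subst o.
have [x [y [xe ye fxy]]] := edgef e (HsK e eE oHs).
have fmerge z : f (odflt v (merge z)) = f z.
  by rewrite /merge; case: ifP => //=; rewrite !inE => /orP [] /eqP ->.
by exists (merge x), (merge y); rewrite !mem_merge_edge // !fmerge.
Qed.

(* a subhypergraph of [G] whose k-colorings descend to [Hs]; it is proper when
   [Hs] is *)
Definition unmerge (Hs : hg (option T)) : hg T :=
  (X1 :|: [set x | Some x \in Hs.1],
   (induced G X1).2 :|: [set e in (induced G X2).2 | merge_edge e \in Hs.2]).

Lemma unmerge_subhg Hs : subhg Hs (identify (induced G X2) v w) -> subhg (unmerge Hs) G.
Proof.
move=> [hHs [/= HsV HsE]]; split; last split=> /=.
- move=> e; rewrite in_setU => /orP [].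
    by rewrite inE => /andP [/hG [_ ?] eX1]; rewrite subsetU ?eX1.
  rewrite !inE => /andP [/andP [eE _] mergeHs]; have [_ ?] := hG eE; split=> //.
  apply/subsetP=> x xe; have /(subsetP (proj1 (hHs _ mergeHs))) := mem_merge_edge xe.
  rewrite /merge; case: ifP => xvw xHs; first by rewrite inE (subsetP vw_sub1).
  by rewrite !inE xHs orbT.
- rewrite subUset X1V; apply/subsetP=> x; rewrite inE => /(subsetP HsV).
  by rewrite in_setU1 /= => /imsetP [y]; rewrite inE => /andP [_ /(subsetP X2V) ?] [->].
- by rewrite subUset; apply/andP; split; apply/subsetP=> e; rewrite !inE => /andP [] // /andP [].
Qed.

Lemma unmerge_proper Hs : proper_subhg Hs (identify (induced G X2) v w) -> unmerge Hs <> G.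
Proof.
move=> [[hHs [/= HsV HsE]] HsneG] KG.
have [allE|] := boolP ((identify (induced G X2) v w).2 \subset Hs.2); last first.
  case/subsetPn=> o /imsetP [e]; rewrite inE => /andP [eE eX2] -> eHs.
  have : e \in (unmerge Hs).2 by rewrite KG.
  by rewrite !inE eE (negPf eHs) eX2 andbF orbF => /(edge_not_both eE)/(_ eX2).
have [allV|] := boolP ((identify (induced G X2) v w).1 \subset Hs.1).
  by apply: HsneG; apply: subhg_eq.
case/subsetPn=> -[x|] xV xHs.
  move: xV xHs; rewrite in_setU1 /= => /imsetP [y]; rewrite inE => /andP [yvw yX2] [->] yHs.
  have : y \in (unmerge Hs).1 by rewrite KG (subsetP X2V).
  by rewrite !inE (negPf yHs) orbF => yX1; rewrite -IX inE yX1 yX2 in yvw.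
have v_free e : e \in (induced G X2).2 -> v \notin e.
  move=> eE; apply: contra xHs => ve.
  have [eHs _] := hHs _ (subsetP allE _ (imset_f merge_edge eE)).
  by apply: (subsetP eHs); rewrite (_ : None = merge v) ?mem_merge_edge // /merge !inE eqxx.
have [f2 [range2 edge2]] := col2.
apply: (diff2 (f := fun x => if x == v then f2 w else f2 x)); last first.
  by rewrite eqxx eq_sym (negPf vw).
split=> [x xX2|e eE]; first by case: ifP => _; apply: range2.
have [x [y [xe ye fxy]]] := edge2 e eE.
have nv z : z \in e -> (z == v) = false by move=> ze; apply: contraNF (v_free e eE) => /eqP <-.
by exists x, y; rewrite !nv.
Qed.

Lemma identify_critical : critical k (identify (induced G X2) v w).
Proof.
apply: critical_intro; first exact: identify_hypergraph.
- have [f2 [range2 edge2]] := col2.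
  exists (fun o => if o is Some x then f2 x else k.+1); split.
    case=> [x|_] /=; last by rewrite ltnSn.
    rewrite in_setU1 /= => /imsetP [y]; rewrite inE => /andP [_ /range2 ?] [->]; lia.
  move=> _ /imsetP [e eE ->]; have [y ye yvw] := side2_edge_leaves_pair eE.
  have [x [z [xe ze fxz]]] := edge2 e eE.
  rewrite /merge_edge; case: ifP => vwe; last by exists (Some x), (Some z); rewrite !imset_f.
  have [eX2 _] := induced_hypergraph (X := X2) hG eE.
  have /andP [_ f2y] := range2 y (subsetP eX2 y ye).
  exists None, (Some y); split; first exact: setU11.
    by rewrite in_setU1 imset_f // inE yvw ye.
  by rewrite neq_ltn ltnS f2y orbT.
- by move=> [psi /coloring_unmerge/diff2]; rewrite /= /merge !inE !eqxx orbT.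
- move=> Hs properHs; have [[_ [_ HsE]] _] := properHs.
  have [f colf] := critical_proper_colorable crit
    (conj (unmerge_subhg properHs.1) (unmerge_proper properHs)).
  have fvw : f v = f w by apply: same1; apply: (coloring_sub colf); rewrite subsetUl.
  exists (fun o => f (odflt v o)); apply: (coloring_merged colf fvw) => //.
  + by rewrite inE v1.
  + by move=> x xHs; rewrite !inE xHs orbT.
  + by move=> e eE eHs; apply/setUP; right; rewrite inE eE eHs.
Qed.

End SplitAtPair.

Section Deletion.
Variables (T : finType) (G : hg T) (S : {set T}).
Hypothesis hG : hypergraph G.
Hypothesis SV : S \subset G.1.
Local Notation D := (delete G S).

Lemma delete_hypergraph : hypergraph D.
Proof.
move=> e' /imsetP [e]; rewrite inE => /andP [_ card_e] ->; split=> //; exact: subsetIr.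
Qed.

Lemma hadj_deleteP x y : hadj D x y ->
  exists2 e, e \in G.2 & [/\ x \in e, y \in e, x \in D.1 & y \in D.1].
Proof.
case/existsP=> e' /and3P [/imsetP [e]]; rewrite inE => /andP [eE _] ->.
by rewrite !in_setI => /andP [xe xV] /andP [ye yV]; exists e.
Qed.

Lemma hadj_delete e x y : e \in G.2 -> x \in e -> y \in e -> x \in D.1 -> y \in D.1 ->
  x != y -> hadj D x y.
Proof.
move=> eE xe ye xV yV xy; apply/existsP; exists (e :&: D.1); rewrite !in_setI xe ye xV yV !andbT.
apply/imsetP; exists e => //; rewrite inE eE; apply/card_gt1P.
by exists x, y; rewrite !in_setI xe ye xV yV.
Qed.

Lemma closed_split (U : {set T}) :
  U \subset D.1 -> (forall x y, x \in U -> hadj D x y -> y \in U) ->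
  hg_split G (U :|: S) (G.1 :\: U) /\ (U :|: S) :&: (G.1 :\: U) = S.
Proof.
move=> UV closedU; have UG z : z \in U -> (z \in G.1) && (z \notin S).
  by move/(subsetP UV); rewrite !inE andbC.
split; [split|].
- apply/setP=> z; rewrite !inE; case: (boolP (z \in U)) => [/UG /andP [] //|_ /=].
  by case: (boolP (z \in S)) => //= zS; rewrite (subsetP SV z zS).
- move=> e eE; have [eV _] := hG eE.
  case: (boolP [exists x in e, x \in U]) => [/exists_inP [x xe xU]|/exists_inPn noU].
    left; apply/subsetP=> y ye; rewrite inE; case: (boolP (y \in S)) => yS; rewrite ?orbT //= orbF.
    have [<-//|xy] := eqVneq x y.
    apply: closedU xU (hadj_delete eE xe ye (subsetP UV x xU) _ xy).
    by rewrite inE yS (subsetP eV).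
  by right; apply/subsetP=> y ye; rewrite inE noU // (subsetP eV).
- apply/setP=> z; rewrite !inE; case: (boolP (z \in U)) => [/UG /andP [_ /negPf ->] //|_ /=].
  by case: (boolP (z \in S)) => // zS; rewrite (subsetP SV z zS).
Qed.

Lemma reach_sub_compl x y : y \in D.1 -> y \notin reach D x ->
  reach D y :|: S \subset G.1 :\: reach D x.
Proof.
move=> yV yx; apply/subsetP=> z; rewrite in_setU => /orP [zy|zS].
  have /setDP [zG _] := subsetP (reach_sub D y) z zy.
  rewrite inE zG andbT; apply: contra yx => zx.
  by rewrite -(reach_eq zx) (reach_eq zy) reach_self.
rewrite inE (subsetP SV z zS) andbT; apply: contraL zS => /(subsetP (reach_sub D x)).
by rewrite inE => /andP [].
Qed.

End Deletion.

Section PairComponents.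
Variables (T : finType) (k : nat) (G : hg T) (v w : T).
Hypothesis crit : critical k G.
Hypothesis vwV : [set v; w] \subset G.1.
Local Notation S := [set v; w].
Local Notation D := (delete G [set v; w]).

Let hG : hypergraph G. Proof. by case: crit. Qed.
Let hD : hypergraph D. Proof. exact: delete_hypergraph. Qed.

Lemma reach_split x :
  hg_split G (reach D x :|: S) (G.1 :\: reach D x) /\
  (reach D x :|: S) :&: (G.1 :\: reach D x) = S.
Proof. by apply: (closed_split hG vwV); [exact: reach_sub | exact: (reach_hadj hD)]. Qed.

Lemma reach_notin_sym x y : y \in D.1 -> y \notin reach D x -> x \notin reach D y.
Proof. by move=> yV; apply: contra => xy; rewrite (reach_eq xy) reach_self. Qed.

Lemma reach_colorable x y : y \in D.1 -> y \notin reach D x ->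
  colorable k (induced G (reach D x :|: S)).
Proof.
move=> yV yx; have [splitx _] := reach_split x.
apply: (split_colorable crit splitx (b := y)); first by rewrite inE yx; case/setDP: yV.
by rewrite in_setU negb_or yx; case/setDP: yV.
Qed.

Lemma reach_compl_colorable x : x \in D.1 -> colorable k (induced G (G.1 :\: reach D x)).
Proof.
move=> xV; have [splitx _] := reach_split x.
apply: (split_colorable crit (hg_splitC splitx) (b := x)); first by rewrite in_setU reach_self.
by rewrite inE reach_self.
Qed.

(* Otherwise the k-colorable complementary side would clash with one of the two
   colorings. *)
Lemma reach_not_same_diff x : x \in D.1 ->
  ~ (colorable_same k G (reach D x :|: S) v w /\ colorable_diff k G (reach D x :|: S) v w).
Proof.
move=> xV [samex diffx]; have [splitx Ix] := reach_split x.
have [samec|diffc] := colorable_same_or_diff v w (reach_compl_colorable xV).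
  exact: (split_not_same2 crit splitx Ix).
exact: (split_not_diff2 crit splitx Ix).
Qed.

Lemma reach_not_same2 x y : x \in D.1 -> y \in D.1 -> y \notin reach D x ->
  ~ (colorable_same k G (reach D x :|: S) v w /\ colorable_same k G (reach D y :|: S) v w).
Proof.
move=> xV yV yx [samex samey]; have [splitx Ix] := reach_split x.
have [samec|diffc] := colorable_same_or_diff v w (reach_compl_colorable xV).
  exact: (split_not_same2 crit splitx Ix).
apply: (reach_not_same_diff yV); split=> //.
exact: colorable_diff_sub (reach_sub_compl vwV yV yx) diffc.
Qed.

Lemma reach_not_diff2 x y : x \in D.1 -> y \in D.1 -> y \notin reach D x ->
  ~ (colorable_diff k G (reach D x :|: S) v w /\ colorable_diff k G (reach D y :|: S) v w).
Proof.
move=> xV yV yx [diffx diffy]; have [splitx Ix] := reach_split x.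
have [samec|diffc] := colorable_same_or_diff v w (reach_compl_colorable xV).
  apply: (reach_not_same_diff yV); split=> //.
  exact: colorable_same_sub (reach_sub_compl vwV yV yx) samec.
exact: (split_not_diff2 crit splitx Ix).
Qed.

(* Pigeonhole: three components would give three sides, each admitting a
   coloring with [v], [w] equal or one with [v], [w] distinct, and no two
   components may share such a coloring type. *)
Lemma reach_cover a b : a \in D.1 -> b \in D.1 -> b \notin reach D a ->
  forall z, z \in D.1 -> z \in reach D a \/ z \in reach D b.
Proof.
move=> aV bV ba z zV; case: (boolP (z \in reach D a)) => [|za]; [by left | right].
apply/negPn/negP=> zb; have ab := reach_notin_sym bV ba; have az := reach_notin_sym zV za.
have := colorable_same_or_diff v w (reach_colorable bV ba).
have := colorable_same_or_diff v w (reach_colorable aV ab).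
have := colorable_same_or_diff v w (reach_colorable aV az).
have := reach_not_same2 aV bV ba; have := reach_not_diff2 aV bV ba.
have := reach_not_same2 aV zV za; have := reach_not_diff2 aV zV za.
have := reach_not_same2 bV zV zb; have := reach_not_diff2 bV zV zb.
tauto.
Qed.

Lemma split_reach X1 X2 a b : hg_split G X1 X2 -> X1 :&: X2 = S ->
  a \in X1 -> a \notin X2 -> b \in X2 -> b \notin X1 -> b \notin reach D a.
Proof.
move=> [_ splitE] IX a1 a2 b2 b1.
have side1 : closed (hadj D) (X1 :\: S).
  move=> x y /hadj_deleteP [e eE [xe ye /setDP [_ xS] /setDP [_ yS]]].
  rewrite !in_setD xS yS /=.
  have [eX|eX] := splitE e eE; first by rewrite !(subsetP eX).
  have notX1 z : z \in e -> z \notin S -> z \in X1 = false.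
    by move=> ze zS; apply: contraNF zS => z1; rewrite -IX inE z1 (subsetP eX).
  by rewrite !notX1.
rewrite inE negb_and; apply/orP; right; apply: contraL b1 => /(closed_connect side1).
have aS : a \notin S by rewrite -IX inE (negPf a2) andbF.
by rewrite !in_setD aS a1 => /esym /andP [_ ->].
Qed.

Definition separation_structure : Prop :=
  exists H1 H2 : hg T,
    [/\ H1 <> H2, component H1 D, component H2 D,
        (forall H, component H D -> H = H1 \/ H = H2) &
        let G1 := induced G (H1.1 :|: S) in
        let G2 := induced G (H2.1 :|: S) in
        [/\ exists phi1, coloring k G1 phi1 /\ phi1 v = phi1 w,
            (forall phi, coloring k G1 phi -> phi v = phi w),
            (forall phi, coloring k G2 phi -> phi v <> phi w),
            critical k (add_edge G1 v w) &
            critical k (identify G2 v w)]].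

Lemma pair_components p q : v != w -> p \in D.1 -> q \in D.1 -> q \notin reach D p ->
  (forall z, z \in D.1 -> z \in reach D p \/ z \in reach D q) ->
  colorable_same k G (reach D p :|: S) v w -> separation_structure.
Proof.
move=> vw pV qV qp cover samep; have pq := reach_notin_sym qV qp.
have complp : G.1 :\: reach D p = reach D q :|: S.
  apply/eqP; rewrite eqEsubset reach_sub_compl // andbT; apply/subsetP=> z /setDP [zG zp].
  rewrite in_setU; case: (boolP (z \in S)) => zS; rewrite ?orbT // orbF.
  by have [|zp'|//] := cover z; [rewrite inE zS | rewrite zp' in zp].
have [splitpq Ipq] := reach_split p; rewrite complp in splitpq Ipq.
have same1 f : coloring k (induced G (reach D p :|: S)) f -> f v = f w.
  move=> colf; case: (eqVneq (f v) (f w)) => // /eqP fvw; exfalso.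
  by apply: (reach_not_same_diff pV); split=> //; exists f.
have diff2 f : coloring k (induced G (reach D q :|: S)) f -> f v <> f w.
  by move=> colf fvw; apply: (reach_not_same2 pV qV qp); split=> //; exists f.
have col1 : colorable k (induced G (reach D p :|: S)) by case: samep => f; exists f.
have col2 := reach_colorable pV pq.
exists (comp_at D p), (comp_at D q); split.
- by move=> pq_eq; move: (reach_self pV); rewrite [reach D p]/(comp_at D p).1 pq_eq /= (negPf pq).
- exact: comp_at_component.
- exact: comp_at_component.
- move=> H /component_comp_at [//||x xV ->]; first by apply/set0Pn; exists p.
  by have [] := cover x xV => /reach_eq xE; [left|right]; rewrite /comp_at xE.
split=> //=; first by case: samep => f; exists f.
  exact: (add_edge_critical crit vw splitpq Ipq col1 same1 col2 diff2).
exact: (identify_critical crit vw splitpq Ipq col1 same1 col2 diff2).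
Qed.

Lemma separating_pair_structure X1 X2 a b : v != w -> hg_split G X1 X2 -> X1 :&: X2 = S ->
  a \in X1 -> a \notin X2 -> b \in X2 -> b \notin X1 -> separation_structure.
Proof.
move=> vw splitX IX a1 a2 b2 b1.
have aV : a \in D.1 by rewrite -IX; exact: split_private_vertex.
have bV : b \in D.1 by rewrite -IX setIC; exact: split_private_vertex (hg_splitC splitX) b2 b1.
have ba := split_reach splitX IX a1 a2 b2 b1; have ab := reach_notin_sym bV ba.
have cover := reach_cover aV bV ba.
have [samea|sameb] : colorable_same k G (reach D a :|: S) v w \/
                     colorable_same k G (reach D b :|: S) v w.
  have := reach_not_diff2 aV bV ba.
  have := colorable_same_or_diff v w (reach_colorable bV ba).
  have := colorable_same_or_diff v w (reach_colorable aV ab).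
  tauto.
  exact: pair_components vw aV bV ba cover samea.
apply: pair_components vw bV aV ab _ sameb.
by move=> z /cover [] ?; [right|left].
Qed.

End PairComponents.

Theorem theorem8 (T : finType) (k : nat) (G : hg T) (S : {set T}) :
  2 <= k -> critical k G ->
  S \subset G.1 -> separating G S -> #|S| <= 2 ->
  exists v w : T,
    [/\ v != w, S = [set v; w], [set v; w] \notin G.2 &
      exists H1 H2 : hg T,
        [/\ H1 <> H2, component H1 (delete G S), component H2 (delete G S),
            (forall H, component H (delete G S) -> H = H1 \/ H = H2) &
            let G1 := induced G (H1.1 :|: S) in
            let G2 := induced G (H2.1 :|: S) in
            [/\ exists phi1, coloring k G1 phi1 /\ phi1 v = phi1 w,
                (forall phi, coloring k G1 phi -> phi v = phi w),
                (forall phi, coloring k G2 phi -> phi v <> phi w),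
                critical k (add_edge G1 v w) &
                critical k (identify G2 v w)]]].
Proof.
move=> _ crit SV sepS cardS.
have [v [w [vw SE]]] := critical_separating_pair crit sepS cardS; subst S.
have [X1 [X2 [splitX IX [a a1 a2] [b b2 b1]]]] := separating_split sepS.
have col1 := split_colorable crit splitX b2 b1.
have col2 := split_colorable crit (hg_splitC splitX) a1 a2.
exists v, w; split=> //; first exact: (split_pair_not_edge crit splitX IX col1 col2).
exact: (separating_pair_structure crit SV vw splitX IX a1 a2 b2 b1).
Qed.
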